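(* Let $\mathcal{V}$ be a subspace of $\mathbb{R}^n$ and let $V$ be a $k\times n$ real matrix whose row space is $\mathcal{V}$. If there is a centered ellipsoid in $\mathbb{R}^k$ passing through all columns of $V$, then for every $k'\times n$ real matrix $\tilde V$ whose row space is $\mathcal{V}$ there is a centered ellipsoid in $\mathbb{R}^{k'}$ passing through all columns of $\tilde V$.
   Context: A centered ellipsoid in $\mathbb{R}^k$ is described by a symmetric positive semidefinite $k\times k$ matrix $M$; it passes through (i.e. has on its boundary) a point $v\in\mathbb{R}^k$ if $v^TMv=1$. *)

From HB Require Import structures.
From mathcomp Require Import all_boot all_order all_algebra.
Set Implicit Arguments. Unset Strict Implicit. Unset Printing Implicit Defensive.
Import Order.TTheory GRing.Theory Num.Theory.
Local Open Scope ring_scope.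

Definition psd (R : realFieldType) (k : nat) (M : 'M[R]_k) : Prop :=
  M^T = M /\ forall v : 'cV[R]_k, 0 <= (v^T *m M *m v) 0 0.

Definition ellipsoid_through (R : realFieldType) (k : nat) (M : 'M[R]_k)
  (v : 'cV[R]_k) : Prop := (v^T *m M *m v) 0 0 = 1.

Definition has_ellipsoid_through_cols (R : realFieldType) (k n : nat)
  (V : 'M[R]_(k, n)) : Prop :=
  exists M : 'M[R]_k, psd M /\ forall j : 'I_n, ellipsoid_through M (col j V).

From mathcomp Require Import all_boot all_order all_algebra.
From mathcomp Require Import reals.
Local Open Scope ring_scope.
Import GRing.Theory.

(* If the row space of V is contained in that of W, then V = Y W for some Y,
   so every column of V is the image under Y of the matching column of W.
   An ellipsoid M through the columns of V therefore pulls back along Y to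
   the ellipsoid Y^T M Y through the columns of W; positive semidefiniteness
   survives this congruence. *)

Section Congruence.

Variables (R : realFieldType) (k m : nat).
Implicit Types (M : 'M[R]_k) (Y : 'M[R]_(k, m)) (v : 'cV[R]_m).

Lemma quad_form_mulmx M Y v :
  (Y *m v)^T *m M *m (Y *m v) = v^T *m (Y^T *m M *m Y) *m v.
Proof. by rewrite trmx_mul !mulmxA. Qed.

Lemma psd_congr M Y : psd M -> psd (Y^T *m M *m Y).
Proof.
move=> [MT M_ge0]; split => [|v]; first by rewrite !trmx_mul trmxK MT mulmxA.
by rewrite -quad_form_mulmx.
Qed.

Lemma ellipsoid_through_congr M Y v :
  ellipsoid_through M (Y *m v) -> ellipsoid_through (Y^T *m M *m Y) v.
Proof. by rewrite /ellipsoid_through quad_form_mulmx. Qed.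

End Congruence.

Lemma col_mulmx (R : realFieldType) (k m n : nat) (Y : 'M[R]_(k, m))
    (W : 'M[R]_(m, n)) (j : 'I_n) :
  col j (Y *m W) = Y *m col j W.
Proof. by rewrite !colE mulmxA. Qed.

Lemma has_ellipsoid_through_cols_mulmx (R : realFieldType) (k m n : nat)
    (Y : 'M[R]_(k, m)) (W : 'M[R]_(m, n)) :
  has_ellipsoid_through_cols (Y *m W) -> has_ellipsoid_through_cols W.
Proof.
move=> [M [M_psd M_cols]]; exists (Y^T *m M *m Y); split.
  exact: psd_congr.
by move=> j; apply: ellipsoid_through_congr; rewrite -col_mulmx.
Qed.

Lemma has_ellipsoid_through_cols_submx (R : realFieldType) (k m n : nat)
    (V : 'M[R]_(k, n)) (W : 'M[R]_(m, n)) :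
  (V <= W)%MS -> has_ellipsoid_through_cols V -> has_ellipsoid_through_cols W.
Proof. by move=> /submxP[Y ->]; apply: has_ellipsoid_through_cols_mulmx. Qed.

Theorem lemma2p4 (R : realType) (n k : nat) (V : 'M[R]_(k, n)) :
  has_ellipsoid_through_cols V ->
  forall (k' : nat) (Vt : 'M[R]_(k', n)),
    (Vt == V)%MS -> has_ellipsoid_through_cols Vt.
Proof.
move=> V_ell k' Vt /andP[_ V_sub_Vt].
exact: has_ellipsoid_through_cols_submx V_sub_Vt V_ell.
Qed.
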